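(* Let $G$ be a finite group and $\chi\in\mathrm{Irr}(G)$. Then $\chi$ is linear (i.e. $\chi(1)=1$) if and only if $[Z(\chi),G]=G'$.
   Context: $\mathrm{Irr}(G)$ is the set of complex irreducible characters of $G$. For a character $\chi$, $Z(\chi)=\{g\in G: |\chi(g)|=\chi(1)\}$. *)

From mathcomp Require Import all_boot all_order all_algebra all_fingroup all_solvable all_field all_character.

From mathcomp Require Import all_boot all_order all_algebra all_fingroup all_solvable all_field all_character.
Import GRing.Theory Num.Theory.
Local Open Scope ring_scope.

(* A linear character has modulus 1 everywhere, so its centre is all of G and
   [Z(chi), G] = G'.  Conversely Z(chi)/ker chi is central in G/ker chi, so
   [Z(chi), G] always lies in ker chi; if it equals G', then G' <= ker chi and
   an irreducible character with G' in its kernel is linear. *)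

Lemma irr1_eq1_lin_char (gT : finGroupType) (G : {group gT}) (i : Iirr G) :
  ('chi[G]_i 1%g == 1) = ('chi_i \is a linear_char).
Proof. by rewrite qualifE /= irr_char. Qed.

Lemma cfcenter_lin_char (gT : finGroupType) (G : {group gT}) (xi : 'CF(G)) :
  xi \is a linear_char -> ('Z(xi))%CF = G.
Proof.
move=> Lxi; apply/eqP; rewrite eqEsubset cfcenter_sub /=.
apply/subsetP => x Gx; rewrite char_cfcenterE ?lin_charW //.
by rewrite normC_lin_char // lin_char1.
Qed.

Lemma cfcenter_comm_sub_cfker (gT : finGroupType) (G : {group gT}) (phi : 'CF(G)) :
  ([~: ('Z(phi))%CF, G] \subset cfker phi)%g.
Proof.
have nKG : (G \subset 'N(cfker phi))%g := normal_norm (cfker_normal phi).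
have nKZ := subset_trans (cfcenter_sub phi) nKG.
have := cfcenter_subset_center phi; rewrite subsetI => /andP[_ cZG].
by rewrite -quotient_cents2.
Qed.

Theorem mainTheorem9 (gT : finGroupType) (G : {group gT}) (i : Iirr G) :
  ('chi[G]_i 1%g == 1) = ([~: ('Z('chi[G]_i))%CF, G] == G^`(1))%g.
Proof.
rewrite irr1_eq1_lin_char; apply/idP/eqP => [Lchi | defG'].
  by rewrite cfcenter_lin_char.
by rewrite lin_irr_der1 -defG' cfcenter_comm_sub_cfker.
Qed.
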